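(* Let $\ell=2m+1\ge3$, $a\in\mathfrak o_\ell^\times$ with image $\bar a\in\mathfrak o_m$, let $x\in\mathfrak g(\mathfrak o_m)$ be an $\bar a$-regular element and $\tilde x\in\mathfrak g(\mathfrak o_\ell)$ any lift of $x$. Then $\mathbf U(\mathfrak o_\ell)\cap C_{\mathbf G(\mathfrak o_\ell)}(\tilde x)K_\ell^m=\mathbf U(\varpi^m\mathfrak o_\ell)$.
   Context: $\mathfrak o$: ring of integers of a non-archimedean local field, uniformizer $\varpi$, residue field $\mathbb F_q$ of characteristic $p$; $\mathfrak o_r=\mathfrak o/\varpi^r\mathfrak o$. Either $\mathbf G={\rm GL}_n$, $\mathfrak g=M_n$, or $\mathbf G={\rm SL}_n$, $\mathfrak g=\mathfrak{sl}_n$ with $p$ odd, $p\nmid n$. $\mathbf U(\mathfrak o_\ell)$: upper unitriangular matrices in $\mathbf G(\mathfrak o_\ell)$; $\mathbf U(\varpi^k\mathfrak o_\ell)$: those with strictly upper triangular entries in $\varpi^k\mathfrak o_\ell$. $K_\ell^m=\ker(\mathbf G(\mathfrak o_\ell)\to\mathbf G(\mathfrak o_m))$. For $\alpha\in\mathfrak o_m^\times$, an $\alpha$-regular element of $\mathfrak g(\mathfrak o_m)$ is a matrix with $(2,1)$ entry $\alpha$, $(i+1,i)$ entries $1$ for $2\le i\le n-1$, arbitrary last column, other entries $0$. $C_{\mathbf G(\mathfrak o_\ell)}(\tilde x)$ is the centralizer of $\tilde x$ in $\mathbf G(\mathfrak o_\ell)$. *)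

From HB Require Import structures.
From mathcomp Require Import all_boot all_order all_algebra.
Set Implicit Arguments. Unset Strict Implicit. Unset Printing Implicit Defensive.
Import GRing.Theory.
Local Open Scope ring_scope.

(* Elements of o_k = o / varpi^k o are represented by elements of o;
   [congr w k x y] means x = y in o_k. *)
Definition congr (O : comNzRingType) (w : O) (k : nat) (x y : O) : Prop :=
  exists z : O, x - y = w ^+ k * z.

Definition mcongr (O : comNzRingType) (w : O) (k n : nat) (A B : 'M[O]_n) : Prop :=
  forall i j, congr w k (A i j) (B i j).

(* o is the ring of integers of a non-archimedean local field with
   uniformizer w and residue field of characteristic p, i.e. a complete
   discrete valuation ring with uniformizer w and finite residue field. *)
Definition local_integers (O : idomainType) (w : O) (p : nat) : Prop :=
  [/\ w != 0 /\ w \isn't a GRing.unit,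
      (forall x : O, x != 0 -> exists k u, u \is a GRing.unit /\ x = u * w ^+ k),
      (forall f : nat -> O, (forall k, congr w k (f k.+1) (f k)) ->
          exists y, forall k, congr w k y (f k)),
      (exists s : seq O, forall x : O, exists2 y, y \in s & congr w 1 x y)
    &
      prime p /\ congr w 1 (p%:R) 0].

Definition unit_mod (O : comNzRingType) (w : O) (k : nat) (x : O) : Prop :=
  exists y, congr w k (x * y) 1.

(* g in G(o_k): G = SL_n if sl, GL_n otherwise *)
Definition inG (O : comNzRingType) (w : O) (sl : bool) (k n : nat) (g : 'M[O]_n) : Prop :=
  if sl then congr w k (\det g) 1 else unit_mod w k (\det g).

(* X in Lie G (o_k): sl_n if sl, M_n otherwise *)
Definition inLie (O : comNzRingType) (w : O) (sl : bool) (k n : nat) (X : 'M[O]_n) : Prop :=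
  if sl then congr w k (\tr X) 0 else True.

(* x in g(o_k) is alpha-regular: (2,1) entry alpha, (i+1,i) entries 1 for
   2 <= i <= n-1, arbitrary last column, other entries 0 (0-based indices). *)
Definition regular_elt (O : comNzRingType) (w : O) (k n : nat) (alpha : O) (x : 'M[O]_n) : Prop :=
  forall i j : 'I_n, (j.+1 != n)%N ->
    congr w k (x i j)
      (if (i == j.+1 :> nat) then (if (j == 0 :> nat) then alpha else 1) else 0).

Definition inU (O : comNzRingType) (w : O) (k n : nat) (g : 'M[O]_n) : Prop :=
  forall i j : 'I_n,
    ((j < i)%N -> congr w k (g i j) 0) /\ ((i == j :> nat) -> congr w k (g i j) 1).

Definition inUw (O : comNzRingType) (w : O) (k m n : nat) (g : 'M[O]_n) : Prop :=
  inU w k g /\ forall i j : 'I_n, (i < j)%N ->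
     exists z, congr w k (g i j) (w ^+ m * z).

Definition inCK (O : comNzRingType) (w : O) (sl : bool) (k m n : nat) (xt g : 'M[O]_n) : Prop :=
  exists c kk : 'M[O]_n,
    [/\ inG w sl k c, mcongr w k (c *m xt) (xt *m c),
        inG w sl k kk, mcongr w m kk 1%:M
      & mcongr w k g (c *m kk)].

(* Modulo [w^m], an element [c k] of [C(xt) K^m] reduces to [c], which commutes
   with [x].  If [g] is upper unitriangular mod [w^m] and
   commutes with the regular element [x], compare the entries [(i, j-1)] of
   [g x] and [x g]: right multiplication by [x] moves column [j] to column
   [j-1] up to the unit [x_(j, j-1)], while left multiplication moves row
   [i-1] to row [i] plus a multiple of the last row, whose entry in column
   [j-1 < n-1] vanishes.  Hence [g_(i,j) x_(j,j-1) = x_(i,i-1) g_(i-1,j-1)], and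
   induction on [i] kills every strictly upper entry of [g] mod [w^m].
   Conversely an element of [U(w^m o_l)] is already in [K^m]. *)

From HB Require Import structures.
From mathcomp Require Import all_boot all_order all_algebra.
Import GRing.Theory.
Local Open Scope ring_scope.

Section Congruence.
Context {O : comNzRingType} {w : O}.

Lemma congr_refl {k x} : congr w k x x.
Proof. by exists 0; rewrite subrr mulr0. Qed.

Lemma congr_sym {k x y} : congr w k x y -> congr w k y x.
Proof. by case=> z h; exists (- z); rewrite mulrN -h opprB. Qed.

Lemma congr_trans {k x y t} : congr w k x y -> congr w k y t -> congr w k x t.
Proof. by case=> z1 h1 [z2 h2]; exists (z1 + z2); rewrite mulrDr -h1 -h2 addrA subrK. Qed.

Lemma congrD {k x1 x2 y1 y2} :
  congr w k x1 x2 -> congr w k y1 y2 -> congr w k (x1 + y1) (x2 + y2).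
Proof. by case=> z1 h1 [z2 h2]; exists (z1 + z2); rewrite mulrDr -h1 -h2 opprD addrACA. Qed.

Lemma congrM {k x1 x2 y1 y2} :
  congr w k x1 x2 -> congr w k y1 y2 -> congr w k (x1 * y1) (x2 * y2).
Proof.
case=> z1 h1 [z2 h2]; exists (z1 * y1 + x2 * z2).
have -> : x1 * y1 - x2 * y2 = (x1 - x2) * y1 + x2 * (y1 - y2).
  by rewrite mulrBl mulrBr addrA subrK.
by rewrite h1 h2 mulrDr -!mulrA [x2 * _]mulrCA.
Qed.

Lemma congr_weaken {k k' x y} : (k' <= k)%N -> congr w k x y -> congr w k' x y.
Proof. by move=> le_k'k [z h]; exists (w ^+ (k - k') * z); rewrite h mulrA -exprD subnKC. Qed.

Lemma congr_sum {k} {I : finType} {F G : I -> O} :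
  (forall i, congr w k (F i) (G i)) -> congr w k (\sum_i F i) (\sum_i G i).
Proof. by move=> h; apply: big_ind2 => // [|? ? ? ?]; [exact: congr_refl | exact: congrD]. Qed.

Lemma congr_sum_eq0 {k} {I : finType} {P : pred I} {F : I -> O} :
  (forall i, P i -> congr w k (F i) 0) -> congr w k (\sum_(i | P i) F i) 0.
Proof.
move=> h; apply: (big_ind (fun y => congr w k y 0)) => //; first exact: congr_refl.
by move=> y z hy hz; rewrite -(addr0 0); exact: congrD.
Qed.

Lemma congr_prod {k} {I : finType} {F G : I -> O} :
  (forall i, congr w k (F i) (G i)) -> congr w k (\prod_i F i) (\prod_i G i).
Proof. by move=> h; apply: big_ind2 => // [|? ? ? ?]; [exact: congr_refl | exact: congrM]. Qed.

Lemma unit_mod_weaken {k k' s} : (k' <= k)%N -> unit_mod w k s -> unit_mod w k' s.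
Proof. by move=> le_k'k [t ht]; exists t; apply: congr_weaken ht. Qed.

Lemma unit_mod_mul_eq0 {k y s} : unit_mod w k s -> congr w k (y * s) 0 -> congr w k y 0.
Proof.
case=> t hst hys; rewrite -[y]mulr1 -(mul0r t).
apply: congr_trans (congrM hys (@congr_refl _ t)).
by rewrite -mulrA; apply: congrM congr_refl (congr_sym hst).
Qed.

Lemma mcongr_refl {k n} {A : 'M[O]_n} : mcongr w k A A.
Proof. by move=> i j; exact: congr_refl. Qed.

Lemma mcongr_sym {k n} {A B : 'M[O]_n} : mcongr w k A B -> mcongr w k B A.
Proof. by move=> h i j; exact: congr_sym. Qed.

Lemma mcongr_trans {k n} {A B C : 'M[O]_n} :
  mcongr w k A B -> mcongr w k B C -> mcongr w k A C.
Proof. by move=> h1 h2 i j; exact: congr_trans (h1 i j) (h2 i j). Qed.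

Lemma mcongr_weaken {k k' n} {A B : 'M[O]_n} :
  (k' <= k)%N -> mcongr w k A B -> mcongr w k' A B.
Proof. by move=> le_k'k h i j; exact: congr_weaken le_k'k (h i j). Qed.

Lemma mcongr_mul {k n} {A A' B B' : 'M[O]_n} :
  mcongr w k A A' -> mcongr w k B B' -> mcongr w k (A *m B) (A' *m B').
Proof. by move=> hA hB i j; rewrite !mxE; apply: congr_sum => l; exact: congrM. Qed.

Lemma mcongr_commute {k n} {A A' B B' : 'M[O]_n} :
  mcongr w k A A' -> mcongr w k B B' ->
  mcongr w k (A *m B) (B *m A) -> mcongr w k (A' *m B') (B' *m A').
Proof.
move=> hA hB hAB.
apply: mcongr_trans (mcongr_mul (mcongr_sym hA) (mcongr_sym hB)) _.
exact: mcongr_trans hAB (mcongr_mul hB hA).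
Qed.

Lemma congr_det {k n} {A B : 'M[O]_n} : mcongr w k A B -> congr w k (\det A) (\det B).
Proof.
move=> h; apply: congr_sum => s; apply: congrM congr_refl _.
by apply: congr_prod => i; exact: h.
Qed.

End Congruence.

Section Unitriangular.
Context {O : comNzRingType} {w : O} {k n : nat}.

Lemma inG_det_congr1 sl (g : 'M[O]_n) : congr w k (\det g) 1 -> inG w sl k g.
Proof. by rewrite /inG; case: sl => // hg; exists 1; rewrite mulr1. Qed.

Lemma det_inU (g : 'M[O]_n) : inU w k g -> congr w k (\det g) 1.
Proof.
move=> hU.
pose B : 'M[O]_n := \matrix_(i, j) (if (i < j)%N then g i j else (i == j)%:R).
have hgB : mcongr w k g B.
  move=> i j; rewrite mxE; case: ltnP => le_ji; first exact: congr_refl.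
  have [->|neq_ij] := eqVneq i j; first exact: (hU j j).2.
  by apply: (hU i j).1; rewrite ltn_neqAle le_ji andbT eq_sym.
have detB : \det B = 1.
  rewrite -det_tr det_trig; last first.
    apply/is_trig_mxP => i j lt_ij; rewrite !mxE ltnNge (ltnW lt_ij) /=.
    by rewrite (gtn_eqF lt_ij : (j == i) = false).
  by apply: big1 => i _; rewrite !mxE ltnn eqxx.
by rewrite -detB; exact: congr_det hgB.
Qed.

Lemma inUw_mcongr1 m (g : 'M[O]_n) : (m <= k)%N -> inUw w k m g -> mcongr w m g 1%:M.
Proof.
move=> le_mk [hU hup] i j; rewrite mxE.
case: (ltngtP i j) => [lt_ij|lt_ji|/val_inj ->]; last first.
- by rewrite eqxx; apply: congr_weaken le_mk _; exact: (hU j j).2.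
- rewrite (gtn_eqF lt_ji : (i == j) = false).
  by apply: congr_weaken le_mk _; exact: (hU i j).1.
rewrite (ltn_eqF lt_ij : (i == j) = false); have [z hz] := hup i j lt_ij.
by apply: congr_trans (congr_weaken le_mk hz) _; exists z; rewrite subr0.
Qed.

End Unitriangular.

Section RegularElement.
Context {O : comNzRingType} {w : O} {k n : nat} {a : O} {x : 'M[O]_n}.
Hypothesis regular_x : regular_elt w k a x.

Definition regular_subdiag (j : nat) : O := if j == 0 then a else 1.

Lemma unit_mod_regular_subdiag j : unit_mod w k a -> unit_mod w k (regular_subdiag j).
Proof.
by rewrite /regular_subdiag; case: ifP => // _ _; exists 1; rewrite mulr1; exact: congr_refl.
Qed.

Lemma regular_elt_subdiag_col (l j j' : 'I_n) :
  j = j'.+1 :> nat -> congr w k (x l j') (if l == j then regular_subdiag j' else 0).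
Proof. by move=> def_j; have := regular_x l j'; rewrite -def_j ltn_eqF //; apply. Qed.

Lemma mulmx_regular_elt (A : 'M[O]_n) (i j j' : 'I_n) :
  j = j'.+1 :> nat -> congr w k ((A *m x) i j') (A i j * regular_subdiag j').
Proof.
move=> def_j; rewrite mxE (bigD1 j) //= -[_ * regular_subdiag _]addr0.
have := regular_elt_subdiag_col j _ _ def_j; rewrite eqxx => x_jj'.
apply: congrD; first exact: congrM congr_refl x_jj'.
apply: congr_sum_eq0 => l neq_lj; rewrite -(mulr0 (A i l)).
have := regular_elt_subdiag_col l _ _ def_j; rewrite (negbTE neq_lj).
exact: congrM congr_refl.
Qed.

(* Row [i] of [x A] only involves row [i-1] and the last row of [A]. *)
Lemma regular_elt_mulmx_eq0 (A : 'M[O]_n) (i j : 'I_n) :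
  (forall l : 'I_n, l.+1 = n -> congr w k (A l j) 0) ->
  (forall l : 'I_n, i = l.+1 :> nat -> congr w k (A l j) 0) ->
  congr w k ((x *m A) i j) 0.
Proof.
move=> A_last A_prev; rewrite mxE; apply: congr_sum_eq0 => l _.
rewrite -(mulr0 (x i l)).
have [/eqP l_last|l_not_last] := boolP (l.+1 == n).
  by apply: congrM congr_refl (A_last l l_last).
have := regular_x i l l_not_last; case: eqP => [/A_prev A_l _|_ x_il0].
  exact: congrM congr_refl A_l.
by rewrite mulr0 -(mul0r (A l j)); apply: congrM x_il0 congr_refl.
Qed.

Section Centralizer.
Variable g : 'M[O]_n.
Hypotheses (unit_a : unit_mod w k a) (gx_xg : mcongr w k (g *m x) (x *m g)).
Hypothesis g_lower : forall i j : 'I_n, (j < i)%N -> congr w k (g i j) 0.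

Lemma regular_centralizer_upper_step (i j : 'I_n) : (i < j)%N ->
  (forall l j' : 'I_n, i = l.+1 :> nat -> j = j'.+1 :> nat -> congr w k (g l j') 0) ->
  congr w k (g i j) 0.
Proof.
move=> lt_ij g_prev; have j_gt0 : (0 < j)%N by apply: leq_ltn_trans lt_ij.
pose j' : 'I_n := Ordinal (leq_ltn_trans (leq_pred j) (ltn_ord j)).
have def_j : j = j'.+1 :> nat by rewrite /= prednK.
apply: (unit_mod_mul_eq0 (unit_mod_regular_subdiag j' unit_a)).
apply: congr_trans (congr_sym (mulmx_regular_elt g i _ _ def_j)) _.
apply: congr_trans (gx_xg i j') _; apply: regular_elt_mulmx_eq0 => l.
  by move=> l_last; apply: g_lower; rewrite -ltnS l_last -def_j.
by move=> def_i; exact: g_prev.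
Qed.

Lemma regular_centralizer_upper_eq0 :
  forall i j : 'I_n, (i < j)%N -> congr w k (g i j) 0.
Proof.
suff IH : forall i0 (i j : 'I_n), i = i0 :> nat -> (i < j)%N -> congr w k (g i j) 0.
  by move=> i j; exact: IH.
elim=> [|i0 IH] i j def_i lt_ij.
all: apply: (regular_centralizer_upper_step _ _ lt_ij) => l j' def_il def_j.
  by rewrite def_i in def_il.
apply: IH; first by rewrite def_i in def_il; case: def_il.
by rewrite -ltnS -def_il -def_j.
Qed.

End Centralizer.
End RegularElement.

Theorem lemma4p5 (O : idomainType) (w : O) (p : nat) (sl : bool) (n m : nat)
    (a : O) (x xt : 'M[O]_n) :
  local_integers w p ->
  (sl -> odd p /\ ~~ (p %| n)%N) ->
  (1 <= m)%N ->
  unit_mod w (2 * m).+1 a ->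
  inLie w sl m x -> regular_elt w m a x ->
  inLie w sl (2 * m).+1 xt -> mcongr w m xt x ->
  forall g : 'M[O]_n,
    (inU w (2 * m).+1 g /\ inCK w sl (2 * m).+1 m xt g) <-> inUw w (2 * m).+1 m g.
Proof.
move=> _ _ _ unit_a _ regular_x _ xt_x g.
have le_ml : (m <= (2 * m).+1)%N by rewrite mul2n -addnn ltnW // ltnS leq_addr.
split=> [[hU [c [kk [_ cxt_xtc _ kk1 g_ckk]]]] | [hU hup]].
- have g_c : mcongr w m g c.
    apply: mcongr_trans (mcongr_weaken le_ml g_ckk) _.
    by rewrite -{2}[c]mulmx1; exact: mcongr_mul mcongr_refl kk1.
  have gx_xg : mcongr w m (g *m x) (x *m g).
    exact: mcongr_commute (mcongr_sym g_c) xt_x (mcongr_weaken le_ml cxt_xtc).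
  have g_lower (i j : 'I_n) : (j < i)%N -> congr w m (g i j) 0.
    by move=> lt_ji; apply: congr_weaken le_ml _; exact: (hU i j).1.
  split=> // i j lt_ij.
  have [z] := regular_centralizer_upper_eq0 regular_x g (unit_mod_weaken le_ml unit_a)
                gx_xg g_lower i j lt_ij.
  by rewrite subr0 => ->; exists z; exact: congr_refl.
- split=> //; exists 1%:M, g; split.
  + by apply: inG_det_congr1; rewrite det1; exact: congr_refl.
  + by rewrite mul1mx mulmx1; exact: mcongr_refl.
  + exact/inG_det_congr1/det_inU.
  + exact: inUw_mcongr1 le_ml (conj hU hup).
  + by rewrite mul1mx; exact: mcongr_refl.
Qed.
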